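(* In the situation of the context, assume $\mathfrak C_R \subseteq \mathfrak m^2$ and $a_1 + a_n \ge c_R$. Then $S$ has Herzog–Kunz generators $\widetilde x_1, \ldots, \widetilde x_{n+s}$ (so $S = k[[\widetilde x_1,\ldots,\widetilde x_{n+s}]]$) such that $t^{a_1}, t^{a_n}, t^{b_1}, \ldots, t^{b_s}$ are among the $\widetilde x_j$.
   Context: Let $k$ be an algebraically closed field of characteristic $0$ and let $(R,\mathfrak m)$ be a complete local noetherian domain of dimension $1$ containing $k$ with $R/\mathfrak m = k$; its normalization is $\overline R = k[[t]]$, $R\subseteq k[[t]]$ finite birational. Let $v$ be the $t$-adic valuation; for $A \subseteq k((t))$ let $v(A)=\{v(f): f\in A\setminus\{0\}\}$, and $V(T)=v(T)$ for a ring $T$. The conductor is $\mathfrak C_R=\{x\in\overline R: x\overline R\subseteq R\} = t^{c_R}\overline R$. For any such ring $T$ (with maximal ideal $\mathfrak m_T$), its Herzog–Kunz sequence is $v(\mathfrak m_T)\setminus v(\mathfrak m_T^2)$ listed increasingly, and Herzog–Kunz generators are elements of $T$ having exactly these valuations (they generate $T$ as $k[[\cdot]]$, the image of a power series ring). Let $a_1<\cdots<a_n$ be the Herzog–Kunz sequence of $R$ and $x_1,\ldots,x_n$ Herzog–Kunz generators of $R$ with $x_1 = t^{a_1}$. Let $S = R[\mathfrak C_R/x_1]$ and let $b_1<\cdots<b_s$ be the elements of $\{c_R-a_1, \ldots, c_R-1\}$ not in $V(R)$. Known facts (used as given): $S = R[t^{b_1},\ldots,t^{b_s}]$, $c_S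 = c_R - a_1$, and $\mathrm{edim}(S) = n+s$. *)

From mathcomp Require Import all_boot all_order all_algebra.
From Stdlib Require List.
Set Implicit Arguments. Unset Strict Implicit. Unset Printing Implicit Defensive.
Import GRing.Theory.
Local Open Scope ring_scope.

Section PS.
Variable k : fieldType.

(* elements of k[[t]] : f = \sum_n f n t^n *)
Definition ps := nat -> k.

Definition ps_cst (c : k) : ps := fun n => if n == 0%N then c else 0.
Definition ps_add (f g : ps) : ps := fun n => f n + g n.
Definition ps_opp (f : ps) : ps := fun n => - f n.
Definition ps_mul (f g : ps) : ps :=
  fun n => \sum_(i < n.+1) f i * g (n - i)%N.
Definition tpow (j : nat) : ps := fun n => if n == j then 1 else 0.

Fixpoint ps_sum (m : nat) (f : nat -> ps) : ps :=
  match m with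
  | 0%N => ps_cst 0
  | m'.+1 => ps_add (ps_sum m' f) (f m')
  end.

(* t-adic valuation: val f n  <->  f <> 0 and v(f) = n *)
Definition val (f : ps) (n : nat) : Prop :=
  f n != 0 /\ forall m, (m < n)%N -> f m = 0.

Definition vset (A : ps -> Prop) (n : nat) : Prop := exists f, A f /\ val f n.

Definition is_subring (P : ps -> Prop) : Prop :=
  P (ps_cst 1) /\
  (forall f g, P f -> P g -> P (ps_add f g)) /\
  (forall f, P f -> P (ps_opp f)) /\
  (forall f g, P f -> P g -> P (ps_mul f g)).

(* The rings R of the paper: k-subalgebras of k[[t]] (containing k) with
   nonzero conductor, i.e. containing t^c k[[t]] for some c. *)
Definition is_curve_ring (R : ps -> Prop) : Prop :=
  is_subring R /\ (forall c, R (ps_cst c)) /\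
  exists c : nat, forall f, (forall m, (m < c)%N -> f m = 0) -> R f.

Definition conductor (T : ps -> Prop) (x : ps) : Prop :=
  forall y, T (ps_mul x y).

(* maximal ideal of the local ring T: its non-units *)
Definition mideal (T : ps -> Prop) (f : ps) : Prop :=
  T f /\ ~ (exists g, T g /\ ps_mul f g = ps_cst 1).

Definition mideal_sq (T : ps -> Prop) (h : ps) : Prop :=
  exists (m : nat) (f g : nat -> ps),
    (forall i, (i < m)%N -> mideal T (f i) /\ mideal T (g i)) /\
    h = ps_sum m (fun i => ps_mul (f i) (g i)).

Definition HKseq (T : ps -> Prop) (a : seq nat) : Prop :=
  sorted ltn a /\
  forall n, n \in a <-> (vset (mideal T) n /\ ~ vset (mideal_sq T) n).

Definition HKgens (T : ps -> Prop) (xs : seq ps) : Prop :=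
  exists a, HKseq T a /\ size xs = size a /\
    forall i, (i < size a)%N -> T (nth (ps_cst 0) xs i) /\
                                 val (nth (ps_cst 0) xs i) (nth 0%N a i).

Definition adjoin (R J : ps -> Prop) (f : ps) : Prop :=
  forall P, is_subring P -> (forall g, R g -> P g) -> (forall g, J g -> P g) -> P f.

Definition div_set (C : ps -> Prop) (x : ps) (y : ps) : Prop := C (ps_mul x y).

End PS.

From Pilot Require Import Defs.
From HB Require Import structures.
From mathcomp Require Import all_boot all_order all_algebra.
From mathcomp Require Import boolp ring zify.
From Stdlib Require List.
Set Implicit Arguments. Unset Strict Implicit. Unset Printing Implicit Defensive.
Import GRing.Theory.
Local Open Scope ring_scope.

(* Put e = a_1 and d = c_R - e.  Since C_R lies in m_R^2 and m_R lies in
   t^e k[[t]], we get 2e <= c_R, so d >= e > 0; and a_n < c_R.  Every element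
   of S = R[C_R/t^e] is r + p with r in R and p in t^d k[[t]], and such a p lies
   in S; so m_S^2 agrees with m_R^2 modulo t^(e+d) k[[t]] = C_R, and a valuation
   v < c_R of m_S outside v(m_R^2) stays outside v(m_S^2), while every v >= c_R
   is the valuation of t^e t^(v-e) in m_S^2.  The monomials t^(a_1), t^(a_n)
   (a_n >= d because a_1 + a_n >= c_R) and t^(b_j) (b_j >= d, b_j not in V(R))
   all lie in S with valuations in v(m_S) \ v(m_S^2), so they can be taken as
   Herzog-Kunz generators. *)

HB.instance Definition _ (k : fieldType) := Choice.copy (ps k) (nat -> k).

Lemma ps_addA (k : fieldType) : associative (@ps_add k).
Proof. by move=> f g h; apply: funext => n; rewrite /ps_add addrA. Qed.

Lemma ps_addC (k : fieldType) : commutative (@ps_add k).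
Proof. by move=> f g; apply: funext => n; rewrite /ps_add addrC. Qed.

Lemma ps_add0 (k : fieldType) : left_id (ps_cst 0) (@ps_add k).
Proof. by move=> f; apply: funext => n; rewrite /ps_add /ps_cst; case: eqP; rewrite add0r. Qed.

Lemma ps_addN (k : fieldType) : left_inverse (ps_cst 0) (@ps_opp k) (@ps_add k).
Proof. by move=> f; apply: funext => n; rewrite /ps_add /ps_opp /ps_cst addNr; case: eqP. Qed.

HB.instance Definition _ (k : fieldType) :=
  GRing.isZmodule.Build (ps k) (@ps_addA k) (@ps_addC k) (@ps_add0 k) (@ps_addN k).

Definition ps_trunc (k : fieldType) (n : nat) (f : ps k) : {poly k} := \poly_(i < n) f i.

Lemma ps_mul_trunc (k : fieldType) (f g : ps k) i n : (i < n)%N ->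
  ps_mul f g i = (ps_trunc n f * ps_trunc n g)`_i.
Proof.
move=> lt_in; rewrite coefM; apply: eq_bigr => j _; rewrite !coef_poly.
have le_ji : (j <= i)%N by rewrite -ltnS.
by rewrite (leq_ltn_trans le_ji lt_in) (leq_ltn_trans (leq_subr j i) lt_in).
Qed.

Lemma coefM_eq (k : nzRingType) (p p' q q' : {poly k}) i :
  (forall j, (j <= i)%N -> p`_j = p'`_j) -> (forall j, (j <= i)%N -> q`_j = q'`_j) ->
  (p * q)`_i = (p' * q')`_i.
Proof.
move=> eq_p eq_q; rewrite !coefM; apply: eq_bigr => j _.
by rewrite eq_p ?eq_q ?leq_subr // -ltnS.
Qed.

Lemma ps_mulA (k : fieldType) : associative (@ps_mul k).
Proof.
move=> f g h; apply: funext => i; rewrite !(@ps_mul_trunc _ _ _ i i.+1) //.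
have trunc_mul (u v : ps k) j : (j <= i)%N ->
    (ps_trunc i.+1 (ps_mul u v))`_j = (ps_trunc i.+1 u * ps_trunc i.+1 v)`_j.
  by move=> le_ji; rewrite coef_poly ltnS le_ji (@ps_mul_trunc _ _ _ j i.+1).
transitivity ((ps_trunc i.+1 f * (ps_trunc i.+1 g * ps_trunc i.+1 h))`_i).
  by apply: coefM_eq => // j le_ji; rewrite trunc_mul.
by rewrite mulrA; apply: coefM_eq => // j le_ji; rewrite trunc_mul.
Qed.

Lemma ps_mulC (k : fieldType) : commutative (@ps_mul k).
Proof. by move=> f g; apply: funext => i; rewrite !(@ps_mul_trunc _ _ _ i i.+1) // mulrC. Qed.

Lemma ps_mul1 (k : fieldType) : left_id (ps_cst 1) (@ps_mul k).
Proof.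
move=> f; apply: funext => i; rewrite /ps_mul big_ord_recl /= subn0 /ps_cst /= mul1r.
by rewrite big1 ?addr0 // => j _; rewrite mul0r.
Qed.

Lemma ps_mulDl (k : fieldType) : left_distributive (@ps_mul k) (@ps_add k).
Proof.
move=> f g h; apply: funext => i; rewrite /ps_mul /ps_add -big_split /=.
by apply: eq_bigr => j _; rewrite mulrDl.
Qed.

Lemma ps_oner_neq0 (k : fieldType) : ps_cst 1 != ps_cst 0 :> ps k.
Proof. by apply/eqP => /(congr1 (fun f : ps k => f 0%N)) /eqP; rewrite oner_eq0. Qed.

HB.instance Definition _ (k : fieldType) := GRing.Zmodule_isComNzRing.Build (ps k)
  (@ps_mulA k) (@ps_mulC k) (@ps_mul1 k) (@ps_mulDl k) (@ps_oner_neq0 k).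

Section PowerSeries.
Variable k : fieldType.
Implicit Types (f g h : ps k) (m n : nat).

Lemma ps_addE f g : ps_add f g = f + g. Proof. by []. Qed.
Lemma ps_oppE f : ps_opp f = - f. Proof. by []. Qed.
Lemma ps_mulE f g : ps_mul f g = f * g. Proof. by []. Qed.
Lemma ps_coefD f g n : (f + g) n = f n + g n. Proof. by []. Qed.
Lemma ps_coefN f n : (- f) n = - f n. Proof. by []. Qed.
Lemma ps_coefB f g n : (f - g) n = f n - g n. Proof. by []. Qed.
Lemma ps_coefM f g n : (f * g) n = \sum_(i < n.+1) f i * g (n - i)%N. Proof. by []. Qed.

Lemma ps_coef0 n : (0 : ps k) n = 0.
Proof. by case: n. Qed.

Lemma ps_coef1 n : (1 : ps k) n = (n == 0%N)%:R.
Proof. by case: n. Qed.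

Lemma ps_coefM0 f g : (f * g) 0%N = f 0%N * g 0%N.
Proof. by rewrite ps_coefM big_ord1 subn0. Qed.

Lemma ps_coef_sum m (F : 'I_m -> ps k) n : (\sum_(i < m) F i) n = \sum_(i < m) F i n.
Proof. by elim/big_rec2: _ => [|i x y _ <-]; rewrite ?ps_coef0. Qed.

Lemma ps_sumE m (F : nat -> ps k) : ps_sum m F = \sum_(i < m) F i.
Proof. by elim: m => [|m IH]; rewrite ?big_ord0 // big_ord_recr /= -IH. Qed.

Lemma ps_coef_tpowM e f n : (tpow k e * f) n = if (e <= n)%N then f (n - e)%N else 0.
Proof.
rewrite ps_coefM.
under eq_bigr => i _ do rewrite /tpow (fun_if (fun x => x * f (n - i)%N)) mul1r mul0r.
rewrite -big_mkcond /=; case: ifP => le_en.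
  by rewrite (big_pred1 (Ordinal (le_en : (e < n.+1)%N))) // => i; rewrite /= -val_eqE.
by rewrite big_pred0 // => i; apply/eqP => eq_ie; move: (ltn_ord i); rewrite eq_ie ltnS le_en.
Qed.

Lemma tpowD e e' : tpow k e * tpow k e' = tpow k (e + e').
Proof.
apply: funext => n; rewrite ps_coef_tpowM /tpow; case: ifP => le_en; last first.
  by case: eqP => // eq_n; move: le_en; rewrite eq_n leq_addr.
by apply/esym; do 2 case: eqP => //; lia.
Qed.

Lemma tpow_val e : Defs.val (tpow k e) e.
Proof.
split; first by rewrite /tpow eqxx oner_eq0.
by move=> m lt_me; rewrite /tpow; case: eqP => // eq_me; move: lt_me; rewrite eq_me ltnn.
Qed.

Lemma exists_val f m : f m != 0 -> exists2 u, (u <= m)%N & Defs.val f u.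
Proof.
move=> nz_fm; have ex_nz : exists n, f n != 0 by exists m.
case: (ex_minnP ex_nz) => u nz_fu min_u; exists u; first exact: min_u.
by split=> // j lt_ju; apply/eqP; apply: contraTT lt_ju => /min_u; rewrite -leqNgt.
Qed.

Definition vanish N f := forall m, (m < N)%N -> f m = 0.

Lemma vanishW N N' f : (N' <= N)%N -> vanish N f -> vanish N' f.
Proof. by move=> le_N'N vf m lt_mN'; apply: vf; apply: leq_trans le_N'N. Qed.

Lemma vanishD N f g : vanish N f -> vanish N g -> vanish N (f + g).
Proof. by move=> vf vg m lt_mN; rewrite ps_coefD vf ?vg ?addr0. Qed.

Lemma vanishN N f : vanish N f -> vanish N (- f).
Proof. by move=> vf m lt_mN; rewrite ps_coefN vf ?oppr0. Qed.

Lemma vanishM N N' f g : vanish N f -> vanish N' g -> vanish (N + N') (f * g).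
Proof.
move=> vf vg m lt_m; rewrite ps_coefM; apply: big1 => i _.
case: (ltnP i N) => [lt_iN|le_Ni]; first by rewrite vf ?mul0r.
by rewrite vg ?mulr0 //; have := ltn_ord i; lia.
Qed.

Lemma vanishMr N f g : vanish N f -> vanish N (f * g).
Proof. by move=> vf; rewrite -[N]addn0; apply: vanishM. Qed.

Lemma vanishMl N f g : vanish N g -> vanish N (f * g).
Proof. by rewrite mulrC; apply: vanishMr. Qed.

Lemma vanishX f n : vanish 1 f -> vanish n (f ^+ n).
Proof.
move=> vf; elim: n => [|n IH]; first by move=> m.
by rewrite exprS -add1n; apply: vanishM.
Qed.

Lemma vanish_tpow e : vanish e (tpow k e).
Proof.
by move=> m lt_me; rewrite /tpow; case: eqP => // eq_me; move: lt_me; rewrite eq_me ltnn.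
Qed.

Lemma vanish_val N f v : vanish N f -> Defs.val f v -> (N <= v)%N.
Proof. by move=> vf [nz_fv _]; rewrite leqNgt; apply: contra nz_fv => /vf ->. Qed.

Lemma vanish_of_val N f : (forall u, Defs.val f u -> (N <= u)%N) -> vanish N f.
Proof.
move=> N_le m lt_mN; apply/eqP; apply: contraTT lt_mN => /exists_val [u le_um /N_le].
by rewrite -leqNgt => /leq_trans; apply.
Qed.

Lemma val_below N f f' v : vanish N (f - f') -> (v < N)%N -> Defs.val f v -> Defs.val f' v.
Proof.
move=> vd lt_vN [nz_fv low_f].
have eq_ff' n : (n < N)%N -> f' n = f n.
  by move=> lt_nN; apply/eqP; rewrite eq_sym -subr_eq0 -ps_coefB vd.
split=> [|n lt_nv]; first by rewrite eq_ff'.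
by rewrite eq_ff' ?low_f // (ltn_trans lt_nv).
Qed.

End PowerSeries.

Section Units.
Variable k : fieldType.
Implicit Types f g : ps k.

(* [ps_inv_approx f n m] is the m-th coefficient of the inverse of f for m <= n:
   the n-th one solves f_0 g_n + \sum_(i < n) f_(i+1) g_(n-1-i) = 0. *)
Fixpoint ps_inv_approx f n : nat -> k :=
  match n with
  | 0%N => fun m => if m == 0%N then (f 0%N)^-1 else 0
  | n'.+1 => let g := ps_inv_approx f n' in
      fun m => if m == n'.+1 then - (f 0%N)^-1 * \sum_(i < n'.+1) f i.+1 * g (n' - i)%N
               else g m
  end.

Lemma ps_inv_approx_stable f n m : (m <= n)%N -> ps_inv_approx f n m = ps_inv_approx f m m.
Proof.
elim: n => [|n IH] le_mn; first by move: le_mn; rewrite leqn0 => /eqP->.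
rewrite /=; case: eqP => [->|ne_m]; first by rewrite /= eqxx.
by apply: IH; move: le_mn ne_m; lia.
Qed.

Lemma ps_unit f : f 0%N != 0 -> exists g, f * g = 1.
Proof.
move=> nz_f0; exists (fun m => ps_inv_approx f m m); apply: funext => n.
rewrite ps_coef1 ps_coefM; case: n => [|n]; first by rewrite big_ord1 /= mulfV.
rewrite big_ord_recl /= subn0 eqxx mulrA mulrN mulfV // mulN1r addrC.
apply/eqP; rewrite subr_eq0; apply/eqP; apply: eq_bigr => i _.
by rewrite /bump /= add1n subSS ps_inv_approx_stable // leq_subr.
Qed.

End Units.

Section Subring.
Variables (k : fieldType) (P : ps k -> Prop).
Hypothesis P_subring : is_subring P.
Implicit Types f g : ps k.

Lemma subring1 : P 1. Proof. by case: P_subring. Qed.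

Lemma subringD f g : P f -> P g -> P (f + g).
Proof. by case: P_subring => _ [+ _]; apply. Qed.

Lemma subringN f : P f -> P (- f).
Proof. by case: P_subring => _ [_ [+ _]]; apply. Qed.

Lemma subringM f g : P f -> P g -> P (f * g).
Proof. by case: P_subring => _ [_ [_ +]]; apply. Qed.

Lemma subringB f g : P f -> P g -> P (f - g).
Proof. by move=> Pf Pg; apply: subringD Pf (subringN Pg). Qed.

Lemma subring0 : P 0.
Proof. by rewrite -(subrr 1); apply: subringB; apply: subring1. Qed.

Lemma subringX f n : P f -> P (f ^+ n).
Proof. by move=> Pf; elim: n => [|n IH]; [exact: subring1 | rewrite exprS; apply: subringM]. Qed.

Lemma subring_sum n (F : 'I_n -> ps k) : (forall i, P (F i)) -> P (\sum_(i < n) F i).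
Proof. by move=> PF; elim/big_rec: _ => [|i x _ Px]; [exact: subring0 | exact: subringD]. Qed.

Variable N : nat.
Hypotheses (P_cst : forall c, P (ps_cst c)) (P_vanish : forall f, vanish N f -> P f).

(* With c = f_0^-1 and h = 1 - c f in t k[[t]], the inverse of f is
   c (1 + h + ... + h^(N-1)) + h^N f^-1, and the last term lies in t^N k[[t]]. *)
Lemma subring_unit f : P f -> f 0%N != 0 -> exists2 g, P g & f * g = 1.
Proof.
move=> Pf nz_f0; have [g fg1] := ps_unit nz_f0.
pose c : ps k := ps_cst (f 0%N)^-1; pose h := 1 - c * f.
have h_vanish : vanish 1 h.
  move=> m; rewrite ltnS leqn0 => /eqP->.
  by rewrite /h ps_coefB ps_coefM0 ps_coef1 /= mulVf ?subrr.
exists (c * \sum_(i < N) h ^+ i + h ^+ N * g).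
  have Ph : P h := subringB subring1 (subringM (P_cst _) Pf).
  apply: subringD; last by apply: P_vanish; apply: vanishMr; apply: vanishX.
  by apply: subringM (P_cst _) _; apply: subring_sum => i; apply: subringX.
have fc : f * c = 1 - h by rewrite /h; ring.
rewrite mulrDr mulrA fc [f * (_ * g)]mulrCA fg1 mulr1.
by rewrite -opprB mulNr -subrX1; ring.
Qed.

Lemma mideal_coef0 f : mideal P f -> f 0%N = 0.
Proof.
move=> [Pf not_unit]; have [//|/(subring_unit Pf) [g Pg fg1]] := eqVneq (f 0%N) 0.
by case: not_unit; exists g.
Qed.

End Subring.

Section Adjoin.
Variables (k : fieldType) (R J : ps k -> Prop).

Lemma adjoin_subring : is_subring (adjoin R J).
Proof.
split; first by move=> P [].
split.
  move=> f g Af Ag P P_subring PR PJ.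
  by apply: (subringD P_subring); [apply: Af | apply: Ag].
split; first by move=> f Af P P_subring PR PJ; apply: (subringN P_subring); apply: Af.
by move=> f g Af Ag P P_subring PR PJ; apply: (subringM P_subring); [apply: Af | apply: Ag].
Qed.

Lemma adjoinl f : R f -> adjoin R J f.
Proof. by move=> Rf P _ PR _; apply: PR. Qed.

Lemma adjoinr f : J f -> adjoin R J f.
Proof. by move=> Jf P _ _ PJ; apply: PJ. Qed.

End Adjoin.

Lemma nonzero_summand (V : zmodType) n (F : 'I_n -> V) :
  \sum_(i < n) F i != 0 -> exists i, F i != 0.
Proof.
move=> nz_sum; apply/existsP; apply: contraNT nz_sum => /existsPn all0.
by rewrite big1 // => i _; apply/eqP; rewrite -[_ == _]negbK all0.
Qed.

Lemma sorted_head_leq (s : seq nat) w : sorted ltn s -> w \in s -> (head 0%N s <= w)%N.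
Proof.
case: s => // x s /= sorted_s; rewrite inE => /orP [/eqP->//|w_s].
by move: (order_path_min ltn_trans sorted_s) => /allP /(_ _ w_s) /ltnW.
Qed.

Lemma mem_In_map (T : eqType) (U : Type) (f : T -> U) x (s : seq T) :
  x \in s -> List.In (f x) (map f s).
Proof. by elim: s => //= y s IH; rewrite inE => /orP [/eqP->|/IH]; [left | right]. Qed.

Section LocalRing.
Variables (k : fieldType) (T : ps k -> Prop).
Implicit Types f g h : ps k.

Lemma conductor_sub f : conductor T f -> T f.
Proof. by move/(_ 1); rewrite ps_mulE mulr1. Qed.

Lemma coef0_mideal f : T f -> f 0%N = 0 -> mideal T f.
Proof.
move=> Tf f0; split=> // [[g [_ fg1]]].
move: (congr1 (fun u : ps k => u 0%N) fg1) => /eqP.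
by rewrite ps_mulE ps_coefM0 f0 mul0r eq_sym oner_eq0.
Qed.

Lemma mideal_sq_mul f g : mideal T f -> mideal T g -> mideal_sq T (f * g).
Proof. by move=> mf mg; exists 1%N, (fun=> f), (fun=> g); rewrite ps_sumE big_ord1. Qed.

Lemma mideal_sq_sub h : is_subring T -> mideal_sq T h -> T h.
Proof.
move=> T_subring [m [F [G [mFG ->]]]]; rewrite ps_sumE.
elim/big_rec: _ => [|i x _ Tx]; first exact: subring0.
by have [[TF _] [TG _]] := mFG i (ltn_ord i); apply: subringD => //; apply: subringM.
Qed.

Lemma mideal_sq_vanish b h :
  (forall f, mideal T f -> vanish b f) -> mideal_sq T h -> vanish (b + b) h.
Proof.
move=> m_vanish [m [F [G [mFG ->]]]]; rewrite ps_sumE.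
elim/big_rec: _ => [|i x _ vx]; first by move=> n _; apply: ps_coef0.
have [mF mG] := mFG i (ltn_ord i).
by apply: vanishD vx; apply: vanishM; apply: m_vanish.
Qed.

Definition HKval v := vset (mideal T) v /\ ~ vset (mideal_sq T) v.

Lemma HKseq_uniq a b : HKseq T a -> HKseq T b -> a = b.
Proof.
move=> [sorted_a mem_a] [sorted_b mem_b].
apply: (irr_sorted_eq ltn_trans ltnn) => // n.
by apply/idP/idP => [/mem_a/mem_b|/mem_b/mem_a].
Qed.

Lemma HKseq_head a xs : HKseq T a -> HKgens T xs ->
  head (ps_cst 0) xs = tpow k (head 0%N a) -> head 0%N a \in a /\ T (tpow k (head 0%N a)).
Proof.
move=> HKa [b [HKb [size_xs xs_T]]]; rewrite -(HKseq_uniq HKb HKa) => head_xs.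
case: xs head_xs size_xs xs_T => [|x xs] /= head_xs size_xs xs_T.
  by move: (tpow_val k (head 0%N b)).1; rewrite -head_xs /ps_cst; case: ifP; rewrite eqxx.
have lt0b : (0 < size b)%N by rewrite -size_xs.
split; first by case: (b) lt0b => // y s _; apply: mem_head.
by have [] := xs_T 0%N lt0b; rewrite /= head_xs.
Qed.

Lemma HKval_lt N v :
  (forall f, vanish N f -> mideal_sq T f) -> HKval v -> (v < N)%N.
Proof.
move=> sq_vanish [_ not_sq]; rewrite ltnNge; apply/negP => le_Nv; apply: not_sq.
exists (tpow k v); split; last exact: tpow_val.
by apply: sq_vanish; apply: vanishW le_Nv (@vanish_tpow k v).
Qed.

Lemma exists_HKgens_tpow N :
  (forall v, HKval v -> (v < N)%N) ->
  exists xs, HKgens T xs /\ forall v, HKval v -> T (tpow k v) -> List.In (tpow k v) xs.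
Proof.
move=> HK_lt; pose a := [seq v <- iota 0 N | `[< HKval v >]].
have mem_a v : v \in a <-> HKval v.
  rewrite mem_filter mem_iota add0n; split=> [/andP [/asboolP] //|HKv].
  by apply/andP; split; [apply/asboolP | rewrite leq0n HK_lt].
have [W W_HK] : {W : nat -> ps k & forall v, HKval v -> mideal T (W v) /\ Defs.val (W v) v}.
  apply: (@choice _ _ (fun v f => HKval v -> mideal T f /\ Defs.val f v)) => v.
  case: (EM (HKval v)) => [[[f fv] _]|not_HK]; first by exists f.
  by exists 0.
pose x v := if `[< T (tpow k v) >] then tpow k v else W v.
exists (map x a); split.
  exists a; split.
    by split; [apply: sorted_filter; [exact: ltn_trans | exact: iota_ltn_sorted] | exact: mem_a].
  split=> [|i lt_i]; first by rewrite size_map.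
  rewrite (nth_map 0%N) //; have /mem_a HKv := mem_nth 0%N lt_i.
  rewrite /x; case: asboolP => [Tt|_]; first by split=> //; apply: tpow_val.
  by have [[TW _] vW] := W_HK _ HKv.
move=> v HKv Tt; have -> : tpow k v = x v by rewrite /x; case: asboolP.
by apply: mem_In_map; apply/mem_a.
Qed.

Hypothesis mideal_T_coef0 : forall f, mideal T f -> f 0%N = 0.

Lemma vset_mideal_gt0 v : vset (mideal T) v -> (0 < v)%N.
Proof.
move=> [f [mf [nz_fv _]]]; rewrite lt0n; apply: contra nz_fv => /eqP->.
by rewrite mideal_T_coef0.
Qed.

Lemma vset_mideal_sq v : vset (mideal_sq T) v -> exists2 u, (u < v)%N & vset (mideal T) u.
Proof.
move=> [h [[m [F [G [mFG ->]]]] [nz_hv _]]].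
move: nz_hv; rewrite ps_sumE ps_coef_sum => /nonzero_summand [i].
move/nonzero_summand => [j]; rewrite mulf_eq0 negb_or => /andP [nz_F nz_G].
have [mF mG] := mFG i (ltn_ord i).
have lt_jv : (j < v)%N.
  rewrite ltn_neqAle -ltnS ltn_ord andbT; apply: contraNneq nz_G => ->.
  by rewrite subnn mideal_T_coef0.
have [u le_uj val_u] := exists_val nz_F.
by exists u; [exact: leq_ltn_trans le_uj lt_jv | exists (F i)].
Qed.

Lemma HKseq_head_leq a v : HKseq T a -> vset (mideal T) v -> (head 0%N a <= v)%N.
Proof.
move=> [sorted_a mem_a]; elim/ltn_ind: v => v IH mv.
have [/vset_mideal_sq [u lt_uv mu]|not_sq] := EM (vset (mideal_sq T) v).
  exact: leq_trans (IH u lt_uv mu) (ltnW lt_uv).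
by apply: sorted_head_leq sorted_a _; apply/mem_a.
Qed.

Lemma HKseq_mideal_vanish a f : HKseq T a -> mideal T f -> vanish (head 0%N a) f.
Proof. by move=> HKa mf; apply: vanish_of_val => u vu; apply: (HKseq_head_leq HKa); exists f. Qed.

End LocalRing.

Section Blowup.
Variables (k : fieldType) (R : ps k -> Prop) (cR e : nat).
Hypotheses (R_subring : is_subring R) (R_cst : forall c, R (ps_cst c)).
Hypothesis R_conductor : forall f, conductor R f <-> vanish cR f.
Hypothesis mideal_R_vanish : forall f, mideal R f -> vanish e f.
Hypotheses (e_gt0 : (0 < e)%N) (e_double_le : (e + e <= cR)%N) (R_tpow_e : R (tpow k e)).
Implicit Types f g h : ps k.

Let S := adjoin R (div_set (conductor R) (tpow k e)).

Lemma blowup_vanish f : vanish (cR - e) f -> S f.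
Proof.
move=> vf; apply: adjoinr; apply/R_conductor => m lt_m.
by rewrite ps_mulE ps_coef_tpowM; case: ifP => // le_em; apply: vf; lia.
Qed.

Lemma div_conductor_vanish f : div_set (conductor R) (tpow k e) f -> vanish (cR - e) f.
Proof.
move=> /R_conductor vf m lt_m; have := vf (e + m)%N.
by rewrite ps_mulE ps_coef_tpowM leq_addr addKn; apply; lia.
Qed.

Lemma blowup_decomp f : S f -> exists r p, R r /\ vanish (cR - e) p /\ f = r + p.
Proof.
move=> Sf; pose D f := exists r p, R r /\ vanish (cR - e) p /\ f = r + p.
have vanish0 : vanish (cR - e) (0 : ps k) by move=> n _; apply: ps_coef0.
apply: (Sf D); [split; last split; last split| |].
- by exists 1, 0; rewrite addr0; split; [apply: subring1 | split].
- move=> _ _ [r [p [Rr [vp ->]]]] [r' [p' [Rr' [vp' ->]]]].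
  exists (r + r'), (p + p'); split; first exact: subringD.
  by split; [apply: vanishD | rewrite ps_addE addrACA].
- move=> _ [r [p [Rr [vp ->]]]]; exists (- r), (- p).
  by split; [apply: subringN | split; [apply: vanishN | rewrite ps_oppE opprD]].
- move=> _ _ [r [p [Rr [vp ->]]]] [r' [p' [Rr' [vp' ->]]]].
  exists (r * r'), (r * p' + p * (r' + p')); split; first exact: subringM.
  split; first by apply: vanishD; [apply: vanishMl | apply: vanishMr].
  by rewrite ps_mulE; ring.
- by move=> r Rr; exists r, 0; rewrite addr0.
- by move=> p /div_conductor_vanish vp; exists 0, p; rewrite add0r; split; first apply: subring0.
Qed.

Let S_subring : is_subring S := adjoin_subring _ _.

Lemma mideal_blowup_decomp f :
  mideal S f -> exists r p, mideal R r /\ vanish (cR - e) p /\ f = r + p.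
Proof.
move=> mf; have [r [p [Rr [vp ef]]]] := blowup_decomp mf.1.
have p0 : p 0%N = 0 by apply: vp; lia.
exists r, p; split=> //; apply: coef0_mideal => //.
have := mideal_coef0 S_subring (fun c => adjoinl (R_cst c)) blowup_vanish mf.
by rewrite ef ps_coefD p0 addr0.
Qed.

Lemma mideal_blowup_decomp_fam m (F : nat -> ps k) :
  (forall i, (i < m)%N -> mideal S (F i)) ->
  exists r p : nat -> ps k, forall i, (i < m)%N ->
    mideal R (r i) /\ vanish (cR - e) (p i) /\ F i = r i + p i.
Proof.
move=> mF; pose Q i (rp : ps k * ps k) :=
  (i < m)%N -> mideal R rp.1 /\ vanish (cR - e) rp.2 /\ F i = rp.1 + rp.2.
have [rp rpQ] : {rp : nat -> ps k * ps k & forall i, Q i (rp i)}.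
  apply: choice => i; case: (ltnP i m) => [/mF/mideal_blowup_decomp [r [p rp]]|le_mi].
    by exists (r, p).
  by exists (0, 0); rewrite /Q ltnNge le_mi.
by exists (fun i => (rp i).1), (fun i => (rp i).2).
Qed.

(* Modulo the conductor of R, a sum of products of elements of m_S is a sum of
   products of their parts in m_R: the cross terms lie in t^e t^(cR-e) k[[t]]. *)
Lemma mideal_sq_blowup_approx h :
  mideal_sq S h -> exists2 h', mideal_sq R h' & vanish cR (h - h').
Proof.
move=> [m [F [G [mFG ->]]]].
have [rF [pF FP]] := mideal_blowup_decomp_fam (fun i lt_im => (mFG i lt_im).1).
have [rG [pG GP]] := mideal_blowup_decomp_fam (fun i lt_im => (mFG i lt_im).2).
exists (ps_sum m (fun i => ps_mul (rF i) (rG i))).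
  by exists m, rF, rG; split=> // i lt_im; split; [apply: (FP i lt_im).1 | apply: (GP i lt_im).1].
rewrite !ps_sumE -sumrB; elim/big_rec: _ => [|i x _ vx]; first by move=> n _; apply: ps_coef0.
apply: vanishD vx; have [mr [vp ->]] := FP i (ltn_ord i); have [mr' [vp' ->]] := GP i (ltn_ord i).
have -> : ps_mul (rF i + pF i) (rG i + pG i) - ps_mul (rF i) (rG i)
    = rF i * pG i + rG i * pF i + pF i * pG i by rewrite !ps_mulE; ring.
have cR_split : (cR <= e + (cR - e))%N by lia.
apply: vanishD; first apply: vanishD.
- exact: vanishW cR_split (vanishM (mideal_R_vanish mr) vp').
- exact: vanishW cR_split (vanishM (mideal_R_vanish mr') vp).
- by apply: vanishW (vanishM vp vp'); lia.
Qed.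

Lemma vset_mideal_sq_blowup v :
  (v < cR)%N -> vset (mideal_sq S) v -> vset (mideal_sq R) v.
Proof.
move=> lt_v [h [/mideal_sq_blowup_approx [h' sq_h' vd] vh]].
by exists h'; split=> //; apply: val_below vd lt_v vh.
Qed.

Lemma HKval_blowup_lt v : HKval S v -> (v < cR)%N.
Proof.
move=> [_ not_sq]; rewrite ltnNge; apply/negP => le_v; apply: not_sq.
exists (tpow k v); split; last exact: tpow_val.
have -> : tpow k v = tpow k e * tpow k (v - e) by rewrite tpowD subnKC //; lia.
apply: mideal_sq_mul; apply: coef0_mideal.
- exact: adjoinl.
- by apply: vanish_tpow.
- by apply: blowup_vanish; apply: vanishW (@vanish_tpow k (v - e)); lia.
- by apply: vanish_tpow; lia.
Qed.

Lemma HKval_blowup_tpow v :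
  S (tpow k v) -> (0 < v < cR)%N -> ~ vset (mideal_sq R) v -> HKval S v.
Proof.
move=> St /andP [v_gt0 lt_v] not_sq; split; last by move/(vset_mideal_sq_blowup lt_v).
by exists (tpow k v); split; [apply: coef0_mideal St (vanish_tpow k v_gt0) | apply: tpow_val].
Qed.

Lemma blowup_HKgens : exists xs, HKgens S xs /\ forall v, (0 < v < cR)%N ->
  S (tpow k v) -> ~ vset (mideal_sq R) v -> List.In (tpow k v) xs.
Proof.
have [xs [gens_xs tpow_xs]] := exists_HKgens_tpow HKval_blowup_lt.
exists xs; split=> // v v_range St not_sq.
exact: tpow_xs (HKval_blowup_tpow St v_range not_sq) St.
Qed.

End Blowup.

Theorem mainTheorem12 (k : closedFieldType) (char0 : [pchar k]%R =i pred0)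
  (R : ps k -> Prop) (hR : is_curve_ring R)
  (cR : nat) (hcR : forall f, conductor R f <-> (forall m, (m < cR)%N -> f m = 0%R))
  (a : seq nat) (ha : HKseq R a)
  (hx : exists xs : seq (ps k), HKgens R xs /\ head (ps_cst 0%R) xs = tpow k (head 0%N a))
  (hCm2 : forall f, conductor R f -> mideal_sq R f)
  (hsum : (cR <= head 0%N a + last 0%N a)%N) :
  let S := adjoin R (div_set (conductor R) (tpow k (head 0%N a))) in
  exists xs : seq (ps k),
    HKgens S xs /\
    List.In (tpow k (head 0%N a)) xs /\ List.In (tpow k (last 0%N a)) xs /\
    (forall j, (cR - head 0%N a <= j < cR)%N -> ~ vset R j -> List.In (tpow k j) xs).
Proof.
move=> S; set a1 := head 0%N a in hx hsum S *; set an := last 0%N a in hsum *.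
have [R_subring [R_cst _]] := hR.
have R_vanish f : vanish cR f -> R f by move/hcR/conductor_sub.
have sq_vanish f : vanish cR f -> mideal_sq R f by move/hcR/hCm2.
have mR_coef0 := mideal_coef0 R_subring R_cst R_vanish.
have HK_a v : v \in a -> HKval R v by move/(ha.2).
have [a1_a R_ta1] : a1 \in a /\ R (tpow k a1) by have [xs [/(HKseq_head ha)]] := hx.
have an_a : an \in a by rewrite /an; case: (a) a1_a => // y s _; apply: mem_last.
have a1_gt0 := vset_mideal_gt0 mR_coef0 (HK_a _ a1_a).1.
have mR_vanish f : mideal R f -> vanish a1 f := HKseq_mideal_vanish mR_coef0 ha.
have a1_double_le : (a1 + a1 <= cR)%N.
  exact: vanish_val (mideal_sq_vanish mR_vanish (sq_vanish _ (@vanish_tpow k cR))) (tpow_val k cR).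
have an_lt := HKval_lt sq_vanish (HK_a _ an_a).
have S_tpow j : (cR - a1 <= j)%N -> S (tpow k j).
  move=> le_j; apply: (blowup_vanish hcR a1_gt0 a1_double_le).
  exact: vanishW le_j (@vanish_tpow k j).
have [xs [gens_xs tpow_xs]] :=
  blowup_HKgens R_subring R_cst hcR mR_vanish a1_gt0 a1_double_le R_ta1.
exists xs; split=> //; split; last split.
- by apply: tpow_xs; [lia | apply: adjoinl | apply: (HK_a _ a1_a).2].
- by apply: tpow_xs; [lia | apply: S_tpow; lia | apply: (HK_a _ an_a).2].
- move=> j /andP [le_j lt_j] not_Rj; apply: tpow_xs; [lia | exact: S_tpow |].
  by move=> [h [/(mideal_sq_sub R_subring) Rh vh]]; apply: not_Rj; exists h.
Qed.
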